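(* Let $\mathcal{D}\subset\mathbb{R}^d$ be bounded and convex with non-empty interior. Assume $\mathcal{C}\subset\Gamma\backslash G$ is compact and $\theta>\overline\rho(\mathcal{C},\mathcal{D}\times(0,1])$. Then there is a constant $C_\theta<\infty$ such that $\mathcal{G}(M)\leq C_\theta$ for all $M$ with $\Gamma M\in\mathcal{C}D(\theta)^{-1}$.
   Context: Let $G=\operatorname{SL}(d+1,\mathbb{R})$ and $\Gamma=\operatorname{SL}(d+1,\mathbb{Z})$; vectors are row vectors and $\mathbb{Z}^{d+1}M$ is the lattice spanned by the rows of $M$. For $M\in G$, $t\in\mathcal{D}$: $F(M,t)=\min\{y>0\mid (x,y)\in\mathbb{Z}^{d+1}M,\ x+t\in\mathcal{D}\}$ ($x\in\mathbb{R}^d$, $y\in\mathbb{R}$), and $\infty$ if no minimum exists. $\mathcal{G}(M)$ is the number of distinct values the function $t\mapsto F(M,t)$ attains as $t$ runs over $\mathcal{D}$. For a bounded $\mathcal{A}\subset\mathbb{R}^{d+1}$ with non-empty interior, $\rho(M,\mathcal{A})=\inf\{\theta>0\mid \theta\mathcal{A}+\mathbb{Z}^{d+1}M=\mathbb{R}^{d+1}\}$, and for $\mathcal{C}\subset\Gamma\backslash G$, $\overline\rho(\mathcal{C},\mathcal{A})=\sup_{\Gamma M\in\mathcal{C}}\rho(M,\mathcal{A})$. For $\theta>0$, $D(\theta)=\operatorname{diag}(\theta,\ldots,\theta,\theta^{-d})\in G$, and $\mathcal{C}D(\theta)^{-1}=\{\Gamma MD(\theta)^{-1}\mid\Gamma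 M\in\mathcal{C}\}$. *)

From HB Require Import structures.
From mathcomp Require Import all_boot all_order all_algebra.
From mathcomp Require Import all_classical all_reals all_analysis.
Set Implicit Arguments. Unset Strict Implicit. Unset Printing Implicit Defensive.
Import Order.TTheory GRing.Theory Num.Theory.
Import numFieldNormedType.Exports.
Local Open Scope classical_set_scope.
Local Open Scope ring_scope.

(* Vectors of R^(d+1) are row vectors 'rV[R]_(d.+1); the first d coordinates
   are x, the last one (index ord_max) is y. *)
Section Defs.
Variable R : realType.
Variable d : nat.

Definition xpart (v : 'rV[R]_(d.+1)) : 'rV[R]_d :=
  \row_(i < d) v 0 (widen_ord (leqnSn d) i).
Definition ypart (v : 'rV[R]_(d.+1)) : R := v 0 ord_max.

Definition is_int (x : R) : Prop := exists z : int, x = z%:~R.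

Definition SLR : set 'M[R]_(d.+1) := [set M | \det M = 1].
Definition SLZ : set 'M[R]_(d.+1) :=
  [set M | \det M = 1 /\ forall i j, is_int (M i j)].

Definition lattice (M : 'M[R]_(d.+1)) : set 'rV[R]_(d.+1) :=
  [set v | exists a : 'rV[int]_(d.+1), v = map_mx intr a *m M].

Definition convex (D : set 'rV[R]_d) : Prop :=
  forall x y (l : R), D x -> D y -> 0 <= l -> l <= 1 -> D (l *: x + (1 - l) *: y).

Definition Fset (D : set 'rV[R]_d) (M : 'M[R]_(d.+1)) (t : 'rV[R]_d) : set R :=
  [set y | 0 < y /\ exists v, lattice M v /\ ypart v = y /\ D (xpart v + t)].

Definition F (D : set 'rV[R]_d) (M : 'M[R]_(d.+1)) (t : 'rV[R]_d) : \bar R :=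
  if `[< exists y, Fset D M t y /\ forall z, Fset D M t z -> y <= z >]
  then ereal_inf (EFin @` Fset D M t) else +oo%E.

(* GG(M) <= n : the function t |-> F(M,t), t in D, attains at most n distinct values *)
Definition GG_le (D : set 'rV[R]_d) (M : 'M[R]_(d.+1)) (n : nat) : Prop :=
  exists s : seq (\bar R), (size s <= n)%N /\ forall t, D t -> F D M t \in s.

Definition covers (M : 'M[R]_(d.+1)) (A : set 'rV[R]_(d.+1)) (th : R) : Prop :=
  forall v : 'rV[R]_(d.+1), exists a l, A a /\ lattice M l /\ v = th *: a + l.

Definition rho (M : 'M[R]_(d.+1)) (A : set 'rV[R]_(d.+1)) : \bar R :=
  ereal_inf [set th%:E | th in [set th : R | 0 < th /\ covers M A th]].

(* C is represented by its preimage in G (a left-Gamma-invariant set of matrices) *)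
Definition rhobar (C : set 'M[R]_(d.+1)) (A : set 'rV[R]_(d.+1)) : \bar R :=
  ereal_sup [set rho M A | M in C].

(* preimage in G of the image of K in Gamma\G *)
Definition GammaK (K : set 'M[R]_(d.+1)) : set 'M[R]_(d.+1) :=
  [set M | exists g k, SLZ g /\ K k /\ M = g *m k].

Definition cyl (D : set 'rV[R]_d) : set 'rV[R]_(d.+1) :=
  [set v | D (xpart v) /\ 0 < ypart v <= 1].

Definition Dmat (th : R) : 'M[R]_(d.+1) :=
  \matrix_(i, j) (if i == j then (if i == ord_max then th ^- d else th) else 0).

(* preimage in G of C D(theta)^{-1} *)
Definition shifted (C : set 'M[R]_(d.+1)) (th : R) : set 'M[R]_(d.+1) :=
  [set M | exists g M', SLZ g /\ C M' /\ M = g *m M' *m invmx (Dmat th)].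

End Defs.

From HB Require Import structures.
From mathcomp Require Import all_boot all_order all_algebra.
From mathcomp Require Import all_classical all_reals all_analysis.
From mathcomp Require Import perm zify ring lra.
Set Implicit Arguments.
Unset Strict Implicit.
Unset Printing Implicit Defensive.
Import Order.TTheory GRing.Theory Num.Theory.
Import numFieldNormedType.Exports.
Local Open Scope classical_set_scope.
Local Open Scope ring_scope.

(* Write M = g k D(theta)^-1 with g in SL(d+1, Z) and k in K.  As
   rho(g k, D x (0,1]) < theta, the translates of theta' (D x (0,1]) by the
   lattice of g k cover R^(d+1) for some theta' < theta; covering the point
   theta' (t, 0) and using the convexity of D gives, for every t in D, a
   lattice point of M in the window x + t in D, 0 < y <= theta^(d+1).
   Conversely a lattice point b k D(theta)^-1 in the window has b k bounded
   in terms of D and theta only, and k^-1 = adj k ranges over a bounded set,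
   so the integer row b lies in a finite set S independent of M and t.
   Hence F(M, t) is one of the y-coordinates of the points b k D(theta)^-1,
   b in S, and G(M) <= #S. *)

Section MinOfFinite.
Variables (disp : Order.disp_t) (T : orderType disp).

Lemma exists_min_of_finite_below (S : set T) (s : seq T) (c y0 : T) :
  S y0 -> (y0 <= c)%O -> (forall z, S z -> (z <= c)%O -> z \in s) ->
  exists2 y, y \in s & S y /\ forall z, S z -> (y <= z)%O.
Proof.
move=> Sy0 y0c Ss; have y0s := Ss _ Sy0 y0c.
have y0_idx : (index y0 s < size s)%N by rewrite index_mem.
pose P := [pred i : 'I_(size s) | `[< S (nth y0 s i) >]].
have Pi0 : P (Ordinal y0_idx) by apply/asboolP; rewrite /= nth_index.
case: (arg_minP (fun i : 'I_(size s) => nth y0 s i) Pi0).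
move=> im /asboolP Sim im_min.
exists (nth y0 s im); first exact: mem_nth.
split=> // z Sz; case: (leP z c) => zc.
  have z_idx : (index z s < size s)%N by rewrite index_mem Ss.
  rewrite -(nth_index y0 (Ss z Sz zc)); apply: (im_min (Ordinal z_idx)).
  by apply/asboolP; rewrite /= nth_index // Ss.
apply: le_trans (ltW zc); apply: le_trans (im_min _ Pi0) _.
by rewrite /= nth_index.
Qed.

End MinOfFinite.

Section MatrixBounds.
Variable R : realType.

Lemma mx_entry_le_norm m n (A : 'M[R]_(m, n)) i j : `|A i j| <= `|A|.
Proof. by rewrite [X in _ <= X]mx_normrE; apply: (le_bigmax _ _ (i, j)). Qed.

Lemma bounded_set_entries m n (S : set 'M[R]_(m, n)) : bounded_set S ->
  exists2 r : R, 0 <= r & forall A, S A -> forall i j, `|A i j| <= r.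
Proof.
case=> r [rreal hr]; exists (`|r| + 1) => [|A SA i j]; first exact: addr_ge0.
apply: le_trans (mx_entry_le_norm A i j) _; apply: (hr (`|r| + 1)) => //.
by apply: le_lt_trans (real_ler_norm rreal) _; rewrite ltrDl.
Qed.

Lemma cofactor_norm_le n (A : 'M[R]_n) (B : R) :
  (forall i j, `|A i j| <= B) ->
  forall i j, `|cofactor A i j| <= n`!%:R * B ^+ n.-1.
Proof.
move=> hA i j; have B0 : 0 <= B := le_trans (normr_ge0 _) (hA i j).
have term_le (s : 'S_n) :
    `|(-1) ^+ s * \prod_(k | i != k) A k (s k)| <= B ^+ n.-1.
  rewrite normrM normrX normrN1 expr1n mul1r normr_prod.
  apply: le_trans (_ : \prod_(k | i != k) B <= _).
    by apply: ler_prod => k _; rewrite normr_ge0 hA.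
  rewrite prodr_const (eq_card (B := predC1 i)) ?cardC1 ?card_ord // => k.
  by rewrite !inE eq_sym.
rewrite expand_cofactor; apply: le_trans (ler_norm_sum _ _ _) _.
apply: le_trans (_ : \sum_(s : 'S_n) B ^+ n.-1 <= _); last first.
  by rewrite sumr_const -card_Sn mulr_natl.
rewrite [leRHS](bigID (fun s : 'S_n => s i == j)) /=.
apply: ler_wpDr; first by apply: sumr_ge0 => s _; apply: exprn_ge0.
exact: ler_sum.
Qed.

Lemma adj_norm_le n (A : 'M[R]_n) (B : R) :
  (forall i j, `|A i j| <= B) ->
  forall i j, `|\adj A i j| <= n`!%:R * B ^+ n.-1.
Proof. by move=> hA i j; rewrite mxE; apply: cofactor_norm_le. Qed.

Lemma row_norm_le_of_det1 n (A : 'M[R]_n) (u : 'rV[R]_n) (r B : R) :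
  \det A = 1 -> (forall i j, `|\adj A i j| <= B) ->
  (forall j, `|(u *m A) 0 j| <= r) -> forall j, `|u 0 j| <= n%:R * (r * B).
Proof.
move=> detA hadj hu j.
have -> : u = u *m A *m \adj A by rewrite -mulmxA mul_mx_adj detA mulmx1.
rewrite mxE; apply: le_trans (ler_norm_sum _ _ _) _.
apply: le_trans (_ : \sum_(i < n) r * B <= _); last first.
  by rewrite sumr_const card_ord mulr_natl.
apply: ler_sum => i _; rewrite normrM.
by apply: ler_pM; rewrite ?normr_ge0.
Qed.

Lemma int_rows_bounded_finite n (X : R) : exists s : seq 'rV[int]_n,
  forall b : 'rV[int]_n, (forall j, `|(b 0 j)%:~R : R| <= X) -> b \in s.
Proof.
pose N := Num.truncn X.
pose of_box (k : 'rV['I_(N + N).+1]_n) : 'rV[int]_n :=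
  \row_j ((k 0 j : nat)%:Z - N%:Z).
exists [seq of_box k | k <- enum 'rV['I_(N + N).+1]_n] => b hb.
have bN j : (`|b 0%R j| <= N)%N.
  by rewrite -[X in (X <= _)%N](@natrK R); apply: le_truncn;
    rewrite natr_absz intr_norm.
apply/mapP; exists (\row_j inord `|b 0 j + N%:Z|); first by rewrite mem_enum.
apply/rowP => j; rewrite !mxE; move: (b 0 j) (bN j) => z hz.
by rewrite inordK; lia.
Qed.

End MatrixBounds.

Section Lattices.
Variables (R : realType) (d : nat).
Implicit Types (M A g : 'M[R]_(d.+1)) (v w : 'rV[R]_(d.+1)).

Lemma is_int_mx m n (A : 'M[R]_(m, n)) : (forall i j, is_int (A i j)) ->
  exists G : 'M[int]_(m, n), A = map_mx intr G.
Proof.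
move=> hA; have [f hf] := choice (fun ij : 'I_m * 'I_n => hA ij.1 ij.2).
by exists (\matrix_(i, j) f (i, j)); apply/matrixP => i j; rewrite !mxE (hf (i, j)).
Qed.

Lemma SLZ_mul g h : SLZ g -> SLZ h -> SLZ (g *m h).
Proof.
move=> [detg /is_int_mx [G eG]] [deth /is_int_mx [H eH]]; split.
  by rewrite det_mulmx detg deth mulr1.
by move=> i j; exists ((G *m H) i j); rewrite eG eH -map_mxM mxE.
Qed.

Lemma shifted_GammaK (K : set 'M[R]_(d.+1)) th :
  shifted (GammaK K) th `<=` shifted K th.
Proof.
move=> _ [g [_ [SLg [[g' [k [SLg' [Kk ->]]]] ->]]]].
by exists (g *m g'), k; rewrite mulmxA; split => //; apply: SLZ_mul.
Qed.

Lemma latticeN M v : lattice M v -> lattice M (- v).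
Proof. by move=> [a ->]; exists (- a); rewrite map_mxN mulNmx. Qed.

Lemma lattice_mulmxr M A v : lattice M v -> lattice (M *m A) (v *m A).
Proof. by move=> [a ->]; exists a; rewrite mulmxA. Qed.

Lemma lattice_SLZ_mul g M : SLZ g -> lattice (g *m M) `<=` lattice M.
Proof.
move=> [_ /is_int_mx [G ->]] _ [a ->].
by exists (a *m G); rewrite map_mxM mulmxA.
Qed.

Lemma rho_le_rhobar (C : set 'M[R]_(d.+1)) (S : set 'rV[R]_(d.+1)) M :
  C M -> (rho M S <= rhobar C S)%E.
Proof. by move=> CM; apply: ereal_sup_ubound; exists M. Qed.

Lemma rho_lt_covers M (S : set 'rV[R]_(d.+1)) th : (rho M S < th%:E)%E ->
  exists th', [/\ 0 < th', th' < th & covers M S th'].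
Proof.
by case/ereal_inf_lt => _ [th' [th'0 cov] <-]; rewrite lte_fin => ?; exists th'.
Qed.

End Lattices.

Section Coordinates.
Variables (R : realType) (d : nat).
Implicit Types (th a b y : R) (v w : 'rV[R]_(d.+1)) (t : 'rV[R]_d).

Lemma widen_ord_neq_max (i : 'I_d) : (widen_ord (leqnSn d) i == ord_max) = false.
Proof. by rewrite -val_eqE /= ltn_eqF. Qed.

Lemma widen_ord_lift_max (i : 'I_d) : widen_ord (leqnSn d) i = lift ord_max i.
Proof. by apply: ord_inj; rewrite lift_max. Qed.

Lemma coord_cases (P : R -> Prop) v :
  (forall i, P (xpart v 0 i)) -> P (ypart v) -> forall j, P (v 0 j).
Proof.
move=> hx hy j; case: (unliftP ord_max j) => [i ->|->] //.
by have := hx i; rewrite mxE widen_ord_lift_max.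
Qed.

Lemma exists_row_xpart_ypart t y : exists v, xpart v = t /\ ypart v = y.
Proof.
exists (\row_(j < d.+1) if unlift ord_max j is Some i then t 0 i else y); split.
  by apply/rowP => i; rewrite !mxE widen_ord_lift_max liftK.
by rewrite /ypart mxE unlift_none.
Qed.

Lemma Dmat_diag th :
  Dmat d th = diag_mx (\row_j if j == ord_max then th ^- d else th).
Proof.
apply/matrixP => i j; rewrite !mxE.
by case: eqP => [->|_]; rewrite ?eqxx ?mulr1n ?mulr0n.
Qed.

Lemma xpart_mul_Dmat w th : xpart (w *m Dmat d th) = th *: xpart w.
Proof.
by apply/rowP => i; rewrite Dmat_diag mul_mx_diag !mxE widen_ord_neq_max mulrC.
Qed.

Lemma ypart_mul_Dmat w th : ypart (w *m Dmat d th) = ypart w / th ^+ d.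
Proof. by rewrite /ypart Dmat_diag mul_mx_diag !mxE eqxx. Qed.

Lemma Dmat_mul a b : Dmat d a *m Dmat d b = Dmat d (a * b).
Proof.
rewrite !Dmat_diag mulmx_diag; congr diag_mx; apply/rowP => j; rewrite !mxE.
by case: ifP => _; rewrite // exprMn invfM.
Qed.

Lemma Dmat1 : Dmat d (1 : R) = 1%:M.
Proof.
rewrite Dmat_diag -diag_const_mx; congr diag_mx; apply/rowP => j.
by rewrite !mxE expr1n invr1 if_same.
Qed.

Lemma mul_Dmat_mulV w th : th != 0 -> w *m Dmat d th^-1 *m Dmat d th = w.
Proof. by move=> th0; rewrite -mulmxA Dmat_mul mulVf // Dmat1 mulmx1. Qed.

Lemma invmx_Dmat th : th != 0 -> invmx (Dmat d th) = Dmat d th^-1.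
Proof.
move=> th0; have DDV : Dmat d th *m Dmat d th^-1 = 1%:M.
  by rewrite Dmat_mul divff // Dmat1.
have [DU _] := mulmx1_unit DDV.
by rewrite -[LHS]mulmx1 -DDV mulmxA mulVmx // mul1mx.
Qed.

End Coordinates.

Section Window.
Variables (R : realType) (d : nat) (D : set 'rV[R]_d).
Implicit Types (th : R) (v w : 'rV[R]_(d.+1)) (t : 'rV[R]_d).

Lemma covers_window_point Q th th' t : convex D ->
  0 < th' -> th' < th -> covers Q (cyl D) th' -> D t ->
  exists v, [/\ lattice (Q *m Dmat d th^-1) v, D (xpart v + t)
              & 0 < ypart v <= th ^+ d.+1].
Proof.
move=> Dcvx th'0 th'th cov Dt; have th0 := lt_trans th'0 th'th.
have [t0 [xt0 yt0]] := exists_row_xpart_ypart t 0.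
have [a [l [[Da /andP[ya0 ya1]] [lat e]]]] := cov (th' *: t0).
have el : - l = th' *: (a - t0) by rewrite scalerBr e opprD addrA subrr add0r.
exists (- l *m Dmat d th^-1); split.
- exact/lattice_mulmxr/latticeN.
- rewrite xpart_mul_Dmat el.
  have -> : th^-1 *: xpart (th' *: (a - t0)) + t =
            (th' / th) *: xpart a + (1 - th' / th) *: t.
    by apply/rowP => i; rewrite -xt0 !mxE; field; rewrite gt_eqF.
  apply: Dcvx => //; first by rewrite divr_ge0 ?ltW.
  by rewrite ler_pdivrMr // mul1r ltW.
- rewrite ypart_mul_Dmat el /ypart !mxE -/(ypart a) -/(ypart t0) yt0 subr0.
  rewrite exprVn invrK mulr_gt0 ?mulr_gt0 ?exprn_gt0 //= exprS.
  rewrite ler_pM2r ?exprn_gt0 // -[leRHS]mulr1.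
  by apply: ler_pM => //; apply: ltW.
Qed.

Lemma window_mul_Dmat_bounded (rD th : R) t v :
  0 <= rD -> (forall x, D x -> forall i j, `|x i j| <= rD) -> 0 < th -> D t ->
  D (xpart v + t) -> 0 < ypart v <= th ^+ d.+1 ->
  forall j, `|(v *m Dmat d th) 0 j| <= rD *+ 2 * th + th.
Proof.
move=> rD0 hD th0 Dt Dv /andP[y0 y1]; have thd0 := exprn_gt0 d th0.
apply: (coord_cases (P := fun x => `|x| <= rD *+ 2 * th + th)).
  move=> i; rewrite xpart_mul_Dmat mxE normrM gtr0_norm //.
  have : `|xpart v 0 i| <= rD *+ 2.
    have -> : xpart v 0 i = (xpart v + t) 0 i - t 0 i by rewrite !mxE addrK.
    by rewrite mulr2n; apply: le_trans (ler_normB _ _) _; apply: lerD; apply: hD.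
  by move=> xi; nra.
rewrite ypart_mul_Dmat ger0_norm; last by apply: divr_ge0; apply: ltW.
rewrite ler_pdivrMr //; apply: le_trans y1 _; rewrite exprS.
by rewrite ler_pM2r // lerDr mulr_ge0 ?mulrn_wge0 // ltW.
Qed.

Lemma window_int_rows_finite (K : set 'M[R]_(d.+1)) th :
  bounded_set D -> bounded_set K -> 0 < th ->
  exists s : seq 'rV[int]_(d.+1), forall k t (b : 'rV[int]_(d.+1)),
    K k -> \det k = 1 -> D t ->
    D (xpart (map_mx intr b *m k *m Dmat d th^-1) + t) ->
    0 < ypart (map_mx intr b *m k *m Dmat d th^-1) <= th ^+ d.+1 ->
    b \in s.
Proof.
move=> /bounded_set_entries[rD rD0 hD] /bounded_set_entries[rK _ hK] th0.
have [s hs] := int_rows_bounded_finite (d.+1)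
  ((d.+1)%:R * ((rD *+ 2 * th + th) * ((d.+1)`!%:R * rK ^+ d))).
exists s => k t b Kk detk Dt Dv yv; apply: hs => j.
have -> : (b 0 j)%:~R = (map_mx intr b : 'rV[R]_(d.+1)) 0 j by rewrite mxE.
apply: row_norm_le_of_det1 detk (adj_norm_le (hK k Kk)) _ j => j'.
rewrite -(mul_Dmat_mulV (map_mx intr b *m k) (lt0r_neq0 th0)).
exact: (window_mul_Dmat_bounded rD0 hD th0 Dt Dv yv).
Qed.

End Window.

Section FirstReturn.
Variables (R : realType) (d : nat) (D : set 'rV[R]_d).
Implicit Types (M : 'M[R]_(d.+1)) (t : 'rV[R]_d).

Lemma F_eq_min M t (y : R) :
  Fset D M t y -> (forall z, Fset D M t z -> y <= z) -> F D M t = y%:E.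
Proof.
move=> Fy y_min; rewrite /F asboolT; last by exists y.
apply/le_anti/andP; split; first by apply: ereal_inf_lbound; exists y.
by apply/ereal_infP => _ [z Fz <-]; rewrite lee_fin; apply: y_min.
Qed.

Lemma F_mem_window M t (c : R) (ys : seq R) :
  (exists v, [/\ lattice M v, D (xpart v + t) & 0 < ypart v <= c]) ->
  (forall v, lattice M v -> D (xpart v + t) -> 0 < ypart v <= c ->
     ypart v \in ys) ->
  F D M t \in map EFin ys.
Proof.
move=> [v [Mv Dv /andP[yv0 yvc]]] in_ys.
have Fv : Fset D M t (ypart v) by split=> //; exists v.
have [y ys_y [Fy y_min]] : exists2 y, y \in ys &
    Fset D M t y /\ forall z, Fset D M t z -> y <= z.
  apply: (exists_min_of_finite_below Fv yvc) => z [z0 [w [Mw [yw Dw]]]] zc.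
  by rewrite -yw; apply: in_ys => //; rewrite yw z0.
by rewrite (F_eq_min Fy y_min); apply: map_f.
Qed.

End FirstReturn.

Theorem proposition2p4 (R : realType) (d : nat)
  (D : set 'rV[R]_d) (K : set 'M[R]_(d.+1)) (theta : R) :
  bounded_set D -> convex D -> interior D !=set0 ->
  K `<=` @SLR R d -> compact K ->
  0 < theta ->
  (rhobar (GammaK K) (cyl D) < theta%:E)%E ->
  exists Ctheta : nat, forall M : 'M[R]_(d.+1),
    shifted (GammaK K) theta M -> GG_le D M Ctheta.
Proof.
move=> Dbd Dcvx _ KSL Kcpt th0 rho_lt.
have [s s_rows] := window_int_rows_finite Dbd (compact_bounded Kcpt) th0.
exists (size s) => M /shifted_GammaK[g [k [SLg [Kk ->]]]].
have [th' [th'0 th'th cov]] : exists th',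
    [/\ 0 < th', th' < theta & covers (g *m k) (cyl D) th'].
  apply: rho_lt_covers; apply: le_lt_trans rho_lt.
  by apply: rho_le_rhobar; exists g, k.
rewrite invmx_Dmat ?lt0r_neq0 //.
exists (map EFin [seq ypart (map_mx intr b *m k *m Dmat d theta^-1) | b <- s]).
split=> [|t Dt]; first by rewrite !size_map.
apply: F_mem_window.
  exact: covers_window_point Dcvx th'0 th'th cov Dt.
rewrite -mulmxA => _ /(lattice_SLZ_mul SLg)[b ->]; rewrite mulmxA => Dv yv.
exact/map_f/(s_rows _ _ _ Kk (KSL k Kk) Dt).
Qed.
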